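(* Let $(\mathfrak{g},[\cdot,\cdot],\langle\cdot,\cdot\rangle)$ be a quadratic Lie algebra. If $\mathfrak{g}$ admits a symplectic form, i.e. a nondegenerate 2-cocycle $\theta\in\wedge^2\mathfrak{g}^*$, then $\mathfrak{g}$ is nilpotent.
   Context: A quadratic Lie algebra is a finite-dimensional real Lie algebra $\mathfrak{g}$ endowed with a nondegenerate symmetric bilinear form $\langle\cdot,\cdot\rangle$ which is invariant: $\langle [u,v],w\rangle+\langle [u,w],v\rangle=0$ for all $u,v,w\in\mathfrak{g}$. A 2-form $\theta\in\wedge^2\mathfrak{g}^*$ is a 2-cocycle if $\theta([u,v],w)+\theta([v,w],u)+\theta([w,u],v)=0$ for all $u,v,w\in\mathfrak{g}$. *)

From HB Require Import structures.
From mathcomp Require Import all_boot all_order all_algebra.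
From mathcomp Require Import reals.
Set Implicit Arguments. Unset Strict Implicit. Unset Printing Implicit Defensive.
Import Order.TTheory GRing.Theory Num.Theory.
Local Open Scope ring_scope.

Section Defs.
Variables (R : realType) (V : vectType R).

Definition bilinear_op (br : V -> V -> V) : Prop :=
  (forall (a : R) (x y z : V), br (a *: x + y) z = a *: br x z + br y z) /\
  (forall (a : R) (x y z : V), br z (a *: x + y) = a *: br z x + br z y).

Definition bilinear_form (B : V -> V -> R) : Prop :=
  (forall (a : R) (x y z : V), B (a *: x + y) z = a * B x z + B y z) /\
  (forall (a : R) (x y z : V), B z (a *: x + y) = a * B z x + B z y).

Definition is_lie_bracket (br : V -> V -> V) : Prop :=
  [/\ bilinear_op br,
      (forall x, br x x = 0) &
      (forall x y z, br x (br y z) + br y (br z x) + br z (br x y) = 0)].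

Definition nondegenerate (B : V -> V -> R) : Prop :=
  forall x, (forall y, B x y = 0) -> x = 0.

Definition quadratic_form (br : V -> V -> V) (B : V -> V -> R) : Prop :=
  [/\ bilinear_form B,
      (forall x y, B x y = B y x),
      nondegenerate B &
      (forall u v w, B (br u v) w + B (br u w) v = 0)].

Definition two_form (theta : V -> V -> R) : Prop :=
  bilinear_form theta /\ (forall x, theta x x = 0).

Definition two_cocycle (br : V -> V -> V) (theta : V -> V -> R) : Prop :=
  forall u v w, theta (br u v) w + theta (br v w) u + theta (br w u) v = 0.

Definition symplectic_form (br : V -> V -> V) (theta : V -> V -> R) : Prop :=
  [/\ two_form theta, two_cocycle br theta & nondegenerate theta].

(* lower central series: C^0 = g, C^(k+1) = [g, C^k] = span{[x,y] | y in C^k} *)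
Inductive lcs (br : V -> V -> V) : nat -> V -> Prop :=
  | lcs0 : forall x, lcs br 0 x
  | lcs_br : forall k x y, lcs br k y -> lcs br k.+1 (br x y)
  | lcs_zero : forall k, lcs br k.+1 0
  | lcs_add : forall k x y, lcs br k.+1 x -> lcs br k.+1 y -> lcs br k.+1 (x + y)
  | lcs_scale : forall k (a : R) x, lcs br k.+1 x -> lcs br k.+1 (a *: x).

Definition nilpotent_lie (br : V -> V -> V) : Prop :=
  exists k, forall x, lcs br k x -> x = 0.

End Defs.

From HB Require Import structures.
From mathcomp Require Import all_boot all_order all_algebra.
From mathcomp Require Import reals zify ring.
From mathcomp.real_closed Require Import complex.
From Stdlib Require Import Classical.
Set Implicit Arguments. Unset Strict Implicit. Unset Printing Implicit Defensive.
Import Order.TTheory GRing.Theory Num.Theory passmx.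
Local Open Scope ring_scope.

(* Since B is nondegenerate, theta(x, y) = B(D x, y)
   for an invertible linear map D, and the cocycle identity combined with the
   invariance of B says exactly that D is a derivation of g.  By a theorem of
   Jacobson, a Lie algebra with an invertible derivation is nilpotent. *)

Lemma ex_maxn_prop (P : nat -> Prop) N :
  (exists d, P d) -> (forall d, P d -> (d <= N)%N) ->
  exists d, P d /\ forall d', P d' -> (d' <= d)%N.
Proof.
elim: N => [|N IH] [d0 Pd0] bound.
  by exists d0; split=> // d' /bound; rewrite leqn0 => /eqP ->.
case: (classic (P N.+1)) => [PN|nPN]; first by exists N.+1.
apply: IH => [|d Pd]; first by exists d0.
by rewrite -ltnS ltn_neqAle bound // andbT; apply: contraPneq nPN => <-.
Qed.

Section LinearFacts.
Variables (K : pzRingType) (U W : lmodType K) (h : U -> W).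
Hypothesis h_linear : linear h.

Let hL : {linear U -> W} :=
  HB.pack h (GRing.isSemilinear.Build K U W _ h (GRing.semilinear_linear h_linear)).

Lemma lin0 : h 0 = 0. Proof. exact: (linear0 hL). Qed.
Lemma linD x y : h (x + y) = h x + h y. Proof. exact: (linearD hL). Qed.
Lemma linN x : h (- x) = - h x. Proof. exact: (linearN hL). Qed.
Lemma linB x y : h (x - y) = h x - h y. Proof. exact: (linearB hL). Qed.
Lemma linZ a x : h (a *: x) = a *: h x. Proof. exact: (linearZZ hL). Qed.
Lemma lin_sum (I : Type) (r : seq I) (P : pred I) (F : I -> U) :
  h (\sum_(i <- r | P i) F i) = \sum_(i <- r | P i) h (F i).
Proof. exact: (linear_sum hL). Qed.

End LinearFacts.

Lemma linear_add (K : pzRingType) (U W : lmodType K) (f g : U -> W) :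
  linear f -> linear g -> linear (fun x => f x + g x).
Proof. by move=> hf hg a x y; rewrite hf hg scalerDr addrACA. Qed.

Lemma linear_comp (K : pzRingType) (U V W : lmodType K) (f : V -> W) (g : U -> V) :
  linear f -> linear g -> linear (fun x => f (g x)).
Proof. by move=> hf hg a x y; rewrite hg hf. Qed.

Section Expansion.
Variables (K : fieldType) (U W : lmodType K) (m : nat).
Variables (c : U -> 'I_m -> K) (v : 'I_m -> U).
Hypothesis c_expand : forall x, x = \sum_(i < m) c x i *: v i.

Lemma linear_expand (h : U -> W) : linear h ->
  forall x, h x = \sum_(i < m) c x i *: h (v i).
Proof.
move=> hlin x; rewrite {1}[x]c_expand lin_sum //.
by apply: eq_bigr => i _; rewrite linZ.
Qed.

Lemma bilinear_expand (h : U -> U -> W) :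
  (forall z, linear (h^~ z)) -> (forall z, linear (h z)) ->
  forall x y, h x y = \sum_(i < m) \sum_(j < m) (c x i * c y j) *: h (v i) (v j).
Proof.
move=> hl hr x y; rewrite (linear_expand (hl y)); apply: eq_bigr => i _.
rewrite (linear_expand (hr (v i))) scaler_sumr; apply: eq_bigr => j _.
by rewrite scalerA.
Qed.

Lemma bilinear_eq (h h' : U -> U -> W) :
  (forall z, linear (h^~ z)) -> (forall z, linear (h z)) ->
  (forall z, linear (h'^~ z)) -> (forall z, linear (h' z)) ->
  (forall i j, h (v i) (v j) = h' (v i) (v j)) -> forall x y, h x y = h' x y.
Proof.
move=> hl hr hl' hr' hv x y.
rewrite (bilinear_expand hl hr) (bilinear_expand hl' hr').
by apply: eq_bigr => i _; apply: eq_bigr => j _; rewrite hv.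
Qed.

End Expansion.

Section DeltaBasis.
Variables (K : fieldType) (W : lmodType K) (m : nat).

Lemma linear_expand_delta (h : 'rV[K]_m -> W) : linear h ->
  forall u, h u = \sum_(i < m) u 0 i *: h (delta_mx 0 i).
Proof.
exact: (@linear_expand K _ W m (fun (u : 'rV[K]_m) i => u 0 i) (delta_mx 0)
  (@row_sum_delta K m)).
Qed.

Lemma bilinear_eq_delta (h h' : 'rV[K]_m -> 'rV[K]_m -> W) :
  (forall z, linear (h^~ z)) -> (forall z, linear (h z)) ->
  (forall z, linear (h'^~ z)) -> (forall z, linear (h' z)) ->
  (forall i j, h (delta_mx 0 i) (delta_mx 0 j) = h' (delta_mx 0 i) (delta_mx 0 j)) ->
  forall x y, h x y = h' x y.
Proof.
exact: (@bilinear_eq K _ W m (fun (u : 'rV[K]_m) i => u 0 i) (delta_mx 0)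
  (@row_sum_delta K m)).
Qed.

End DeltaBasis.

Lemma alternating_skew (K : pzRingType) (U W : lmodType K) (h : U -> U -> W) :
  (forall z, linear (h^~ z)) -> (forall z, linear (h z)) -> (forall x, h x x = 0) ->
  forall x y, h x y = - h y x.
Proof.
move=> hl hr halt x y; apply/eqP; rewrite -addr_eq0; apply/eqP.
by have := halt (x + y); rewrite (linD (hl _)) !(linD (hr _)) !halt add0r addr0.
Qed.

Section LieAlgebra.
Variables (K : fieldType) (vT : vectType K) (b : vT -> vT -> vT).
Hypothesis b_linl : forall z, linear (b^~ z).
Hypothesis b_linr : forall z, linear (b z).
Hypothesis b_alt : forall x, b x x = 0.
Hypothesis b_jacobi : forall x y z, b x (b y z) + b y (b z x) + b z (b x y) = 0.

Lemma bracket0l z : b 0 z = 0. Proof. exact: lin0 (b_linl z). Qed.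
Lemma bracket0r z : b z 0 = 0. Proof. exact: lin0 (b_linr z). Qed.
Lemma bracketDl x y z : b (x + y) z = b x z + b y z. Proof. exact: (linD (b_linl z) x y). Qed.
Lemma bracketDr x y z : b z (x + y) = b z x + b z y. Proof. exact: (linD (b_linr z) x y). Qed.
Lemma bracketZl a x z : b (a *: x) z = a *: b x z. Proof. exact: (linZ (b_linl z) a x). Qed.
Lemma bracketZr a x z : b z (a *: x) = a *: b z x. Proof. exact: (linZ (b_linr z) a x). Qed.

Lemma bracket_anti x y : b x y = - b y x.
Proof. exact: alternating_skew. Qed.

Lemma ad_derivation k y w : b k (b y w) = b (b k y) w + b y (b k w).
Proof.
have := b_jacobi k y w; rewrite [b w k]bracket_anti linN // [b w (b k y)]bracket_anti.
by move/eqP; rewrite -addrA addr_eq0 opprD !opprK => /eqP ->; rewrite addrC.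
Qed.

Definition killed_by_words d x :=
  forall ws : seq vT, size ws = d -> foldr b x ws = 0.

Lemma words_linear (ws : seq vT) : linear (fun x => foldr b x ws).
Proof. by elim: ws => [//|w ws IH] a x y /=; rewrite IH linD ?linZ. Qed.

Section Engel.
Variable S : vT -> Prop.
Hypothesis S_bracket : forall x y, S x -> S y -> S (b x y).
Hypothesis S_span : exists s, (forall x, x \in s -> S x) /\ (fullv <= <<s>>)%VS.
Hypothesis S_ad_nilpotent : forall y x, S y -> S x -> exists N, iter N (b y) x = 0.

Definition S_spanned (X : {vspace vT}) :=
  exists s, (forall x, x \in s -> S x /\ x \in X) /\ (X <= <<s>>)%VS.
Definition subalgebra (X : {vspace vT}) :=
  forall x y, x \in X -> y \in X -> b x y \in X.
Definition normalizes (X U : {vspace vT}) :=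
  forall x u, x \in X -> u \in U -> b x u \in U.

Lemma S_spanned0 : S_spanned 0%VS.
Proof. by exists [::]; split=> //; rewrite span_nil subvv. Qed.

Lemma S_spanned_adjoin X y : S y -> S_spanned X -> S_spanned (<[y]> + X)%VS.
Proof.
move=> Sy [s [hs Xs]]; exists (y :: s); split; last by rewrite span_cons addvS.
move=> x; rewrite inE => /orP[/eqP ->|xs].
  by split=> //; apply: (subvP (addvSl _ _)); exact: memv_line.
by have [Sx xX] := hs x xs; split=> //; apply: (subvP (addvSr _ _)).
Qed.

Lemma S_spanned_out X U : S_spanned X -> ~~ (X <= U)%VS ->
  exists x, [/\ S x, x \in X & x \notin U].
Proof.
case=> s [hs Xs] nXU; apply: NNPP => noS; apply: (negP nXU).
apply: subv_trans Xs _; apply/span_subvP => x xs; apply: NNPP => xU; apply: noS.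
by have [Sx xX] := hs x xs; exists x; split=> //; apply/negP.
Qed.

Lemma subalgebra_adjoin X y : subalgebra X -> (forall k, k \in X -> b k y \in X) ->
  subalgebra (<[y]> + X)%VS.
Proof.
move=> sX yX x z /memv_addP[_ /vlineP[a ->] [x2 x2X ->]].
move=> /memv_addP[_ /vlineP[c ->] [z2 z2X ->]].
apply: (subvP (addvSr _ _)); rewrite !bracketDl !bracketDr !bracketZl !bracketZr b_alt.
rewrite !scaler0 add0r; apply: memvD; last apply: memvD.
- by rewrite memvZ // bracket_anti memvN yX.
- by rewrite memvZ // yX.
- exact: sX.
Qed.

Lemma maximal_proper_subalgebra (X : {vspace vT}) : X != 0%VS ->
  exists Y : {vspace vT}, [/\ S_spanned Y, subalgebra Y, (Y <= X)%VS, Y != X &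
    forall Z : {vspace vT}, S_spanned Z -> subalgebra Z -> (Z <= X)%VS -> Z != X ->
      (\dim Z <= \dim Y)%N].
Proof.
move=> X0.
pose P d := exists Y : {vspace vT},
  [/\ S_spanned Y, subalgebra Y, (Y <= X)%VS, Y != X & \dim Y = d].
have [d [[Y [sY aY YX nYX <-]] maxY]] :
    exists d, P d /\ forall d', P d' -> (d' <= d)%N.
  apply: (@ex_maxn_prop P (\dim X)).
  exists 0%N, 0%VS; split; rewrite ?sub0v ?dimv0 1?eq_sym //; first exact: S_spanned0.
  by move=> x y; rewrite memv0 => /eqP ->; rewrite bracket0l mem0v.
  by move=> d [Y [_ _ YX _ <-]]; exact: dimvS.
by exists Y; split=> // Z sZ aZ ZX nZX; apply: maxY; exists Z.
Qed.

Lemma ad_iter_normalizes (X' U : {vspace vT}) y v :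
  (forall k, k \in X' -> b k y \in X') -> (forall u, u \in U -> b y u \in U) ->
  (forall k, k \in X' -> b k v \in U) ->
  forall j k, k \in X' -> b k (iter j (b y) v) \in U.
Proof.
move=> yX' yU vU; elim=> [|j IH] k kX' /=; first exact: vU.
by rewrite ad_derivation memvD ?yU ?IH ?yX'.
Qed.

Lemma engel_core m (X : {vspace vT}) : (\dim X <= m)%N -> S_spanned X -> subalgebra X ->
  forall U Y : {vspace vT}, ~~ (Y <= U)%VS -> normalizes X U -> normalizes X Y ->
  S_spanned Y ->
  exists v, [/\ S v, v \in Y, v \notin U & forall k, k \in X -> b k v \in U].
Proof.
elim: m X => [|m IH] X dX sX aX U Y nYU nU nY sY.
  have [x [Sx xY xU]] := S_spanned_out sY nYU.
  exists x; split=> // k; have /eqP-> : X == 0%VS by rewrite -dimv_eq0 -leqn0.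
  by rewrite memv0 => /eqP->; rewrite bracket0l mem0v.
have [X0|X0] := eqVneq X 0%VS; first by apply: IH; rewrite // X0 dimv0.
have [X' [sX' aX' X'X nX'X maxX']] := maximal_proper_subalgebra X0.
have dX' : (\dim X' <= m)%N.
  by rewrite -ltnS (leq_trans _ dX) // ltn_neqAle (dimv_leqif_eq X'X) nX'X dimvS.
have nX'U : normalizes X' U by move=> k u kX'; apply: nU; apply: (subvP X'X).
have nX'Y : normalizes X' Y by move=> k u kX'; apply: nY; apply: (subvP X'X).
have nX'X' : normalizes X' X by move=> k u kX'; apply: aX; apply: (subvP X'X).
have nXX' : ~~ (X <= X')%VS by apply: contra nX'X => XX'; rewrite eqEsubv X'X.
(* First, an element y of S in X \ X' normalized by X'; then X' + <y> = X. *)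
have [y [Sy yX yX' yn]] := IH X' dX' sX' aX' X' X nXX' aX' nX'X' sX.
have XE : (<[y]> + X')%VS = X.
  apply/eqP; apply: NNPP => /negP ne.
  have := maxX' _ (S_spanned_adjoin Sy sX') (subalgebra_adjoin aX' yn).
  rewrite subv_add -memvE yX X'X => /(_ isT ne).
  rewrite leqNgt ltn_neqAle (dimv_leqif_eq (addvSr _ _)) dimvS ?addvSr // andbT.
  move=> /negPn/eqP X'E; move/negP: yX'; apply; rewrite X'E.
  by apply: (subvP (addvSl _ _)); exact: memv_line.
(* Then push an element given by X' along ad y until just before it enters U. *)
have [v [Sv vY vU vn]] := IH X' dX' sX' aX' U Y nYU nX'U nX'Y sY.
pose w j := iter j (b y) v.
have Sw j : S (w j) by elim: j => //= j IHj; apply: S_bracket.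
have wY j : w j \in Y by elim: j => //= j IHj; apply: nY.
have [N wN] := S_ad_nilpotent Sy Sv.
have exU : exists j, w j \in U by exists N; rewrite /w wN mem0v.
case: (ex_minnP exU) => -[|j] wjU minj; first by rewrite /= (negbTE vU) in wjU.
exists (w j); split=> //; first by apply/negP => /minj; rewrite ltnn.
rewrite -XE => k /memv_addP[_ /vlineP[a ->] [k2 k2X' ->]].
have yU u : u \in U -> b y u \in U by apply: nU.
by rewrite bracketDl bracketZl memvD ?memvZ // (ad_iter_normalizes yn yU vn).
Qed.

Lemma ideal_extend (U : {vspace vT}) d : normalizes fullv U -> U != fullv ->
  (forall x, x \in U -> killed_by_words d x) ->
  exists U' : {vspace vT}, [/\ normalizes fullv U', (\dim U < \dim U')%N &
    forall x, x \in U' -> killed_by_words d.+1 x].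
Proof.
move=> nU UF kU.
have sF : S_spanned fullv.
  by case: S_span => s [hs Fs]; exists s; split=> // x xs; rewrite memvf; split; auto.
have aF : subalgebra fullv by move=> *; exact: memvf.
have nFU : ~~ (fullv <= U)%VS.
  by apply: contra UF => FU; rewrite eqEsubv subvf FU.
have [v [_ _ vU vn]] := @engel_core _ fullv (leqnn _) sF aF U fullv nFU nU aF sF.
have UU' : (U <= <[v]> + U)%VS by exact: addvSr.
exists (<[v]> + U)%VS; split.
- move=> k _ _ /memv_addP[_ /vlineP[a ->] [u uU ->]].
  by rewrite bracketDr bracketZr (subvP UU') // memvD ?memvZ ?vn ?nU ?memvf.
- rewrite ltn_neqAle (dimv_leqif_eq UU') dimvS // andbT.
  by apply: contraNneq vU => ->; apply: (subvP (addvSl _ _)); exact: memv_line.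
- move=> x /memv_addP[_ /vlineP[a ->] [u uU ->]] ws sz.
  rewrite (words_linear ws).
  have -> : foldr b v ws = 0.
    case/lastP: ws sz => [|ws w] //; rewrite size_rcons foldr_rcons => -[sz].
    by apply: kU; rewrite ?vn ?memvf.
  have -> : foldr b u ws = 0 by case: ws sz => [|w ws] //= [sz]; rewrite kU // bracket0r.
  by rewrite scaler0 add0r.
Qed.

Theorem engel_words : exists d, forall x, killed_by_words d x.
Proof.
suff grow c (U : {vspace vT}) d : (\dim {:vT} - \dim U <= c)%N ->
    normalizes fullv U -> (forall x, x \in U -> killed_by_words d x) ->
    exists d, forall x, killed_by_words d x.
  apply: (grow _ 0%VS 0%N (leqnn _)).
    by move=> k u _; rewrite memv0 => /eqP->; rewrite bracket0r mem0v.
  by move=> x; rewrite memv0 => /eqP-> [|//].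
elim: c U d => [|c IH] U d cU nU kU.
  have UF : U = fullv by apply/eqP; rewrite eqEdim subvf -subn_eq0 -leqn0.
  by exists d => x; apply: kU; rewrite UF memvf.
have [UF|UF] := eqVneq U fullv; first by exists d => x; apply: kU; rewrite UF memvf.
have [U' [nU' UU' kU']] := ideal_extend nU UF kU.
apply: (IH U' d.+1) => //; have := dimvS (subvf U'); lia.
Qed.

End Engel.
End LieAlgebra.

(* The
   generalized eigenvectors of M satisfy the hypotheses of Engel's theorem. *)
Section Jacobson.
Variables (F : numClosedFieldType) (n : nat).
Local Notation vT := 'rV[F]_n.+1.
Variables (b : vT -> vT -> vT) (M : 'M[F]_n.+1).
Hypothesis b_linl : forall z, linear (b^~ z).
Hypothesis b_linr : forall z, linear (b z).
Hypothesis b_alt : forall x, b x x = 0.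
Hypothesis b_jacobi : forall x y z, b x (b y z) + b y (b z x) + b z (b x y) = 0.
Hypothesis M_unit : M \in unitmx.
Hypothesis M_derivation : forall x y, b x y *m M = b (x *m M) y + b x (y *m M).

Definition geigen l k (x : vT) := x *m (M - l%:M) ^+ k = 0.
Definition homogeneous (x : vT) := exists l k, geigen l k x.

Lemma derivation_shift l m x y :
  b x y *m (M - (l + m)%:M) = b (x *m (M - l%:M)) y + b x (y *m (M - m%:M)).
Proof.
rewrite !mulmxBr !mul_mx_scalar M_derivation (linB (b_linl y)) (linB (b_linr x)).
by rewrite scalerDl (linZ (b_linl y)) (linZ (b_linr x)) opprD addrACA.
Qed.

Lemma geigenS l k x : geigen l k.+1 x = geigen l k (x *m (M - l%:M)).
Proof. by rewrite /geigen exprS -mulmxE mulmxA. Qed.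

Lemma geigen_bracket l m a c x y :
  geigen l a x -> geigen m c y -> geigen (l + m) (a + c) (b x y).
Proof.
elim: {a c}(a + c) {-2}a {-2}c x y (erefl (a + c)) => [|s IH] a c x y.
  case: a c => [|//] [|//] _; rewrite /geigen !expr0 !mulmx1 => ->.
  by rewrite (bracket0l b_linl).
case: a c => [|a] [|c] /=; rewrite ?addn0 ?add0n.
- by [].
- by move=> _; rewrite /geigen expr0 mulmx1 => -> _; rewrite (bracket0l b_linl) mul0mx.
- by move=> _ _; rewrite /geigen expr0 mulmx1 => ->; rewrite (bracket0r b_linr) mul0mx.
rewrite addSn => -[sE] gx gy.
have gx' : geigen l a (x *m (M - l%:M)) by rewrite -geigenS.
have gy' : geigen m c (y *m (M - m%:M)) by rewrite -geigenS.
rewrite geigenS /geigen derivation_shift mulmxDl.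
have sE' : (a.+1 + c)%N = s by rewrite addSnnS.
by rewrite (IH a c.+1 _ _ sE gx' gy) -addSnnS (IH a.+1 c _ _ sE' gx gy') addr0.
Qed.

Lemma geigen_unit_zero l k x : M - l%:M \in unitmx -> geigen l k x -> x = 0.
Proof.
move=> U gx; have Uk : (M - l%:M) ^+ k \in unitmx by rewrite unitrX.
by rewrite -[x](mulmxK Uk) gx mul0mx.
Qed.

Lemma geigen_root l k x : geigen l k x -> x != 0 -> root (char_poly M) l.
Proof.
move=> gx; apply: contraNT => nroot; apply/eqP; apply: (geigen_unit_zero _ gx).
move: nroot; rewrite -eigenvalue_root_char /eigenvalue /eigenspace negbK.
by rewrite kermx_eq0 row_free_unit.
Qed.

Lemma geigen_value_neq0 l k x : geigen l k x -> x != 0 -> l != 0.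
Proof.
move=> gx; apply: contraNneq => l0; apply/eqP; apply: (geigen_unit_zero _ gx).
by rewrite l0 raddf0 subr0.
Qed.

Lemma homogeneous_bracket x y : homogeneous x -> homogeneous y -> homogeneous (b x y).
Proof. by move=> [l [a gx]] [m [c gy]]; exists (l + m), (a + c); exact: geigen_bracket. Qed.

(* ad y shifts the eigenvalue by the nonzero eigenvalue of y; as M has at
   most n + 1 eigenvalues, some iterate of ad y kills x. *)
Lemma homogeneous_ad_nilpotent y x : homogeneous y -> homogeneous x ->
  exists N, iter N (b y) x = 0.
Proof.
move=> [mu [c gy]] [la [a gx]].
have [->|y0] := eqVneq y 0; first by exists 1%N; rewrite /= (bracket0l b_linl).
have mu0 := geigen_value_neq0 gy y0.
have gj j : geigen (la + j%:R * mu) (a + j * c) (iter j (b y) x).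
  elim: j => [|j IHj]; first by rewrite mul0r addr0 mul0n addn0.
  have -> : la + j.+1%:R * mu = mu + (la + j%:R * mu) by ring.
  by rewrite iterS mulSn addnCA; apply: geigen_bracket.
pose rs := [seq la + j%:R * mu | j <- iota 0 n.+2].
have urs : uniq rs.
  rewrite map_inj_uniq ?iota_uniq // => i j /addrI /(mulIf mu0) /eqP.
  by rewrite eqr_nat => /eqP.
have : ~~ all (root (char_poly M)) rs.
  apply/negP => allr; have := max_poly_roots (monic_neq0 (char_poly_monic M)) allr.
  by rewrite urs size_char_poly /rs size_map size_iota ltnn => /(_ isT).
case/allPn => _ /mapP[j _ ->] nroot; exists j; apply/eqP.
by apply: contraNT nroot; exact: geigen_root (gj j).
Qed.

Lemma kernel_coprime_split (p q : {poly F}) (x : vT) : coprimep p q ->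
  x *m horner_mx M (p * q) = 0 ->
  exists2 x1, x1 *m horner_mx M p = 0 & (x - x1) *m horner_mx M q = 0.
Proof.
move=> pq /sub_kermxP; rewrite -[kermx _]/(kermxpoly M (p * q)) (kermxpolyM M pq).
case/sub_addsmxP => -[u1 u2] /= ->; exists (u1 *m kermx (horner_mx M p)).
  by rewrite -mulmxA mulmx_ker mulmx0.
by rewrite addrC addKr -mulmxA mulmx_ker mulmx0.
Qed.

Definition homogeneous_spanned (x : vT) :=
  exists s : seq vT, (forall z, z \in s -> homogeneous z) /\ x \in <<s>>%VS.

Lemma homogeneous_spannedD x y :
  homogeneous_spanned x -> homogeneous_spanned y -> homogeneous_spanned (x + y).
Proof.
move=> [s [hs xs]] [t [ht yt]]; exists (s ++ t); split; last first.
  by rewrite span_cat memv_add.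
by move=> z; rewrite mem_cat => /orP[]; [exact: hs | exact: ht].
Qed.

Lemma homogeneous_span_kernel (rs : seq F) (e : F -> nat) (x : vT) : uniq rs ->
  x *m horner_mx M (\prod_(r <- rs) ('X - r%:P) ^+ e r) = 0 ->
  homogeneous_spanned x.
Proof.
elim: rs x => [|r rs IH] x.
  by rewrite big_nil rmorph1 mulmx1 => _ ->; exists [::]; rewrite span_nil mem0v.
rewrite big_cons /= => /andP[rNrs urs] hx.
have rs_coprime : coprimep (('X - r%:P) ^+ e r) (\prod_(s <- rs) ('X - s%:P) ^+ e s).
  apply: coprimep_expl; rewrite coprimep_sym coprimep_XsubC rootE horner_prod.
  rewrite prodf_seq_neq0; apply/allP => s srs /=; rewrite !hornerE expf_neq0 //.
  by rewrite subr_eq0; apply: contraNneq rNrs => ->.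
have [x1 x1r x2rs] := kernel_coprime_split rs_coprime hx.
rewrite -[x](subrK x1); apply: homogeneous_spannedD; first exact: IH.
exists [:: x1]; split; last by rewrite span_seq1 memv_line.
move=> z; rewrite inE => /eqP->; exists r, (e r).
by move: x1r; rewrite /geigen rmorphXn rmorphB /= horner_mx_X horner_mx_C.
Qed.

Lemma homogeneous_span :
  exists s, (forall z, z \in s -> homogeneous z) /\ (fullv <= <<s>>)%VS.
Proof.
have all_x (x : vT) : homogeneous_spanned x.
  have [rs rsE] := closed_field_poly_normal (char_poly M).
  apply: (@homogeneous_span_kernel (undup rs) (fun r => count_mem r rs)).
    exact: undup_uniq.
  rewrite prodr_undup_exp_count -(scale1r (\prod_(_ <- _) _)).
  by rewrite -(monicP (char_poly_monic M)) -rsE Cayley_Hamilton mulmx0.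
have [s [hs sF]] : exists s, (forall z, z \in s -> homogeneous z) /\
    (<<vbasis fullv>> <= <<s>>)%VS.
  elim: (tval (vbasis fullv)) => [|x L [s [hs Ls]]].
    by exists [::]; rewrite span_nil sub0v.
  have [t [ht xt]] := all_x x; exists (t ++ s); split.
    by move=> z; rewrite mem_cat => /orP[]; [exact: ht | exact: hs].
  by rewrite span_cons span_cat addvS // -memvE.
by exists s; split; rewrite // -(span_basis (vbasisP fullv)).
Qed.

Theorem jacobson_words : exists d, forall x, killed_by_words b d x.
Proof.
apply: (engel_words b_linl b_linr b_alt b_jacobi (S := homogeneous)).
- exact: homogeneous_bracket.
- exact: homogeneous_span.
- exact: homogeneous_ad_nilpotent.
Qed.

End Jacobson.

Theorem invertible_derivation_nilpotent (F : numClosedFieldType) n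
    (b : 'rV[F]_n -> 'rV[F]_n -> 'rV[F]_n) (M : 'M[F]_n) :
  (forall z, linear (b^~ z)) -> (forall z, linear (b z)) -> (forall x, b x x = 0) ->
  (forall x y z, b x (b y z) + b y (b z x) + b z (b x y) = 0) ->
  M \in unitmx -> (forall x y, b x y *m M = b (x *m M) y + b x (y *m M)) ->
  exists d, forall x, killed_by_words b d x.
Proof.
case: n b M => [|n] b M; last exact: jacobson_words.
by exists 0%N => x [|//] _; rewrite thinmx0.
Qed.

Section RealQuadraticSymplectic.
Variables (R : realType) (V : vectType R) (br : V -> V -> V) (B theta : V -> V -> R).
Hypothesis br_linl : forall z, linear (br^~ z).
Hypothesis br_linr : forall z, linear (br z).
Hypothesis br_alt : forall x, br x x = 0.
Hypothesis br_jacobi : forall x y z, br x (br y z) + br y (br z x) + br z (br x y) = 0.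
Hypothesis B_linl : forall z, linear (B^~ z : V -> R^o).
Hypothesis B_linr : forall z, linear (B z : V -> R^o).
Hypothesis B_sym : forall x y, B x y = B y x.
Hypothesis B_nondeg : forall x, (forall y, B x y = 0) -> x = 0.
Hypothesis B_invariant : forall u v w, B (br u v) w + B (br u w) v = 0.
Hypothesis theta_linl : forall z, linear (theta^~ z : V -> R^o).
Hypothesis theta_linr : forall z, linear (theta z : V -> R^o).
Hypothesis theta_alt : forall x, theta x x = 0.
Hypothesis theta_cocycle : two_cocycle br theta.
Hypothesis theta_nondeg : forall x, (forall y, theta x y = 0) -> x = 0.

Local Notation n := (\dim {:V}).
Local Notation e := (vbasis {:V}).
Local Notation coords := (rVof e).
Local Notation vecof := (vecof e).

Lemma coordsK : cancel coords vecof.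
Proof. exact: rVofK (vbasisP _). Qed.

Lemma coords_expand x : x = \sum_(i < n) coords x 0 i *: e`_i.
Proof. by rewrite -{1}[x]coordsK. Qed.

Definition gram (h : V -> V -> R) : 'M[R]_n := \matrix_(i, j) h e`_i e`_j.

Lemma gramE (h : V -> V -> R) :
  (forall z, linear (h^~ z : V -> R^o)) -> (forall z, linear (h z : V -> R^o)) ->
  forall x y, h x y = (coords x *m gram h *m (coords y)^T) 0 0.
Proof.
move=> hl hr x y; rewrite (bilinear_expand coords_expand hl hr) !mxE.
rewrite exchange_big; apply: eq_bigr => j _; rewrite !mxE big_distrl.
by apply: eq_bigr => i _; rewrite /gram !mxE; exact: mulrAC.
Qed.

Lemma gram_unit (h : V -> V -> R) :
  (forall z, linear (h^~ z : V -> R^o)) -> (forall z, linear (h z : V -> R^o)) ->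
  (forall x, (forall y, h x y = 0) -> x = 0) -> gram h \in unitmx.
Proof.
move=> hl hr hnd; rewrite unitmxE unitfE; apply/negP => /det0P[u u0 uG].
have u0' : vecof u = 0.
  by apply: hnd => y; rewrite (gramE hl hr) vecofK ?vbasisP // uG mul0mx mxE.
by move/negP: u0; apply; rewrite -[u](vecofK (vbasisP _)) u0' (rVof_eq0 (vbasisP _)).
Qed.

(* theta(x, y) = B(D x, y) for the linear map D with matrix [symp_mx]. *)
Definition symp_mx : 'M[R]_n := gram theta *m invmx (gram B).
Definition D (x : V) : V := vecof (coords x *m symp_mx).

Lemma theta_via_B x y : theta x y = B (D x) y.
Proof.
rewrite (gramE theta_linl theta_linr) (gramE B_linl B_linr) vecofK ?vbasisP //.
by rewrite /symp_mx -!mulmxA mulKmx // gram_unit.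
Qed.

Lemma symp_mx_unit : symp_mx \in unitmx.
Proof. by rewrite unitmx_mul unitmx_inv !gram_unit. Qed.

(* The cocycle condition and the invariance of B make D a derivation. *)
Lemma D_derivation x y : D (br x y) = br (D x) y + br x (D y).
Proof.
have skew := alternating_skew theta_linl theta_linr theta_alt.
have cyc u v w : B (br u v) w = B (br w u) v.
  apply/eqP; rewrite -subr_eq0 -(linN (B_linl v)) -(alternating_skew br_linl br_linr) //.
  by rewrite B_invariant.
have theta_br z : theta (br x y) z = theta x (br y z) + theta y (br z x).
  apply/eqP; rewrite -subr_eq0 [theta x _]skew [theta y _]skew -opprD opprK addrA.
  by apply/eqP; exact: theta_cocycle.
apply/eqP; rewrite -subr_eq0; apply/eqP; apply: B_nondeg => z.
rewrite (linB (B_linl z)) (linD (B_linl z)) -theta_via_B theta_br !theta_via_B.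
by rewrite B_sym cyc [B (D y) _]B_sym -(cyc x (D y) z) subrr.
Qed.

Local Notation C := (complex R).

(* Complexification: V embeds R-linearly into C^n, and the bracket extends
   C-bilinearly through the structure constants. *)
Definition embed (x : V) : 'rV[C]_n := map_mx (real_complex R) (coords x).

Definition brC (u w : 'rV[C]_n) : 'rV[C]_n :=
  \sum_(i < n) \sum_(j < n) (u 0 i * w 0 j) *: embed (br e`_i e`_j).

Lemma embed0 : embed 0 = 0.
Proof. by rewrite /embed linear0 map_mx0. Qed.

Lemma embedD x y : embed (x + y) = embed x + embed y.
Proof. by rewrite /embed linearD map_mxD. Qed.

Lemma embed_inj : injective embed.
Proof. by move=> x y /map_mx_inj /(can_inj coordsK). Qed.

Lemma embed_basis (i : 'I_n) : embed e`_i = delta_mx 0 i.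
Proof. by rewrite /embed (rVofE (vbasisP _)) map_delta_mx. Qed.

Lemma brC_linl z : linear (brC^~ z).
Proof.
move=> a u w; rewrite /brC scaler_sumr -big_split; apply: eq_bigr => i _ /=.
rewrite scaler_sumr -big_split; apply: eq_bigr => j _ /=.
by rewrite !mxE scalerA -scalerDl mulrDl mulrA.
Qed.

Lemma brC_linr z : linear (brC z).
Proof.
move=> a u w; rewrite /brC scaler_sumr -big_split; apply: eq_bigr => i _ /=.
rewrite scaler_sumr -big_split; apply: eq_bigr => j _ /=.
by rewrite !mxE scalerA -scalerDl mulrDr mulrCA.
Qed.

Lemma brC_embed x y : brC (embed x) (embed y) = embed (br x y).
Proof.
rewrite [in RHS](bilinear_expand coords_expand br_linl br_linr).
rewrite /brC /embed linear_sum map_mx_sum; apply: eq_bigr => i _.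
rewrite linear_sum map_mx_sum; apply: eq_bigr => j _.
by rewrite linearZ map_mxZ !mxE rmorphM.
Qed.

Lemma brC_basis (i j : 'I_n) : brC (delta_mx 0 i) (delta_mx 0 j) = embed (br e`_i e`_j).
Proof. by rewrite -!embed_basis brC_embed. Qed.

Lemma brC_anti u w : brC u w = - brC w u.
Proof.
apply: (bilinear_eq_delta (h' := fun u w => - brC w u)) => [||z a x y|z a x y|i j].
- exact: brC_linl.
- exact: brC_linr.
- by rewrite brC_linr opprD scalerN.
- by rewrite brC_linl opprD scalerN.
- by rewrite !brC_basis (alternating_skew br_linl br_linr br_alt) /embed linearN map_mxN.
Qed.

Lemma brC_alt u : brC u u = 0.
Proof.
apply/eqP; have := brC_anti u u; move/eqP; rewrite -addr_eq0 -mulr2n -scaler_nat.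
by rewrite scaler_eq0 pnatr_eq0.
Qed.

(* The Jacobi expression is linear in its first argument and cyclically
   symmetric, hence trilinear; it vanishes on the image of V. *)
Lemma brC_jacobi u v w : brC u (brC v w) + brC v (brC w u) + brC w (brC u v) = 0.
Proof.
pose J u v w := brC u (brC v w) + brC v (brC w u) + brC w (brC u v).
have Jcyc x y z : J x y z = J y z x by rewrite /J -[LHS]addrA [LHS]addrC.
have Jlin y z : linear (fun x => J x y z).
  apply: linear_add; first apply: linear_add.
  - exact: brC_linl.
  - by apply: linear_comp; [exact: brC_linr | exact: brC_linr].
  - by apply: linear_comp; [exact: brC_linr | exact: brC_linl].
have Jembed x y z : J (embed x) (embed y) (embed z) = 0.
  by rewrite /J !brC_embed -!embedD br_jacobi embed0.
rewrite -/(J u v w) (linear_expand_delta (Jlin v w)) big1 // => i _.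
have lin0 : linear (fun _ : 'rV[C]_n => 0 : 'rV[C]_n) by move=> a x y; rewrite scaler0 addr0.
rewrite Jcyc (bilinear_eq_delta (h := fun y z => J y z (delta_mx 0 i)) (h' := fun _ _ => 0))
  ?scaler0 // => [z a x y|j k].
- by rewrite !(Jcyc z); exact: Jlin.
- by rewrite -!embed_basis Jembed.
Qed.

Definition Mc : 'M[C]_n := map_mx (real_complex R) symp_mx.

Lemma Mc_unit : Mc \in unitmx.
Proof. by rewrite map_unitmx symp_mx_unit. Qed.

Lemma embed_D x : embed (D x) = embed x *m Mc.
Proof. by rewrite /embed /D vecofK ?vbasisP // map_mxM. Qed.

Lemma brC_derivation u w : brC u w *m Mc = brC (u *m Mc) w + brC u (w *m Mc).
Proof.
have mulMc : linear (fun x : 'rV[C]_n => x *m Mc).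
  by move=> a x y; rewrite mulmxDl scalemxAl.
apply: (bilinear_eq_delta (h := fun u w => brC u w *m Mc)
  (h' := fun u w => brC (u *m Mc) w + brC u (w *m Mc))) => [z|z|z|z|i j].
- exact: (linear_comp mulMc (brC_linl z)).
- exact: (linear_comp mulMc (brC_linr z)).
- exact: (linear_add (linear_comp (brC_linl z) mulMc) (brC_linl _)).
- exact: (linear_add (brC_linr _) (linear_comp (brC_linr z) mulMc)).
- by rewrite brC_basis -embed_D D_derivation embedD -!embed_basis -!embed_D !brC_embed.
Qed.

(* Jacobson's theorem over C pulls back to V along the injective bracket
   morphism embed. *)
Theorem quadratic_symplectic_words : exists d, forall x, killed_by_words br d x.
Proof.
have [d hd] := invertible_derivation_nilpotent brC_linl brC_linr brC_alt brC_jacobi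
  Mc_unit brC_derivation.
exists d => x ws sz; apply: embed_inj; rewrite embed0 -(hd (embed x) (map embed ws)).
  by elim: ws {sz} => //= w ws <-; rewrite brC_embed.
by rewrite size_map.
Qed.

End RealQuadraticSymplectic.

Lemma lcs_killed (R : realType) (V : vectType R) (br : V -> V -> V) d :
  (forall z, linear (br z)) -> (forall x, killed_by_words br d x) ->
  forall k x, lcs br k x -> killed_by_words br (d - k) x.
Proof.
move=> br_linr hd k x; elim=> {k x} [x|k x y _ IH|k|k x y _ IHx _ IHy|k a x _ IH] ws sz.
- by apply: hd; rewrite sz subn0.
- have [kd|dk] := ltnP k d.
    by rewrite -foldr_rcons IH // size_rcons sz subnS prednK // subn_gt0.
  have /eqP ws0 : ws == [::] by rewrite -size_eq0 sz subn_eq0 ltnW.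
  have y0 : y = 0 by apply: (IH [::]); apply/esym/eqP; rewrite subn_eq0.
  by rewrite ws0 /= y0 (lin0 (br_linr x)).
- by rewrite (lin0 (words_linear br_linr ws)).
- by rewrite (linD (words_linear br_linr ws)) IHx // IHy // addr0.
- by rewrite (linZ (words_linear br_linr ws)) IH // scaler0.
Qed.

Theorem mainTheorem1 (R : realType) (V : vectType R)
  (br : V -> V -> V) (B : V -> V -> R) :
  is_lie_bracket br -> quadratic_form br B ->
  (exists theta : V -> V -> R, symplectic_form br theta) ->
  nilpotent_lie br.
Proof.
move=> [[brl brr] br_alt br_jacobi] [[Bl Br] B_sym B_nondeg B_inv].
move=> [theta [[[thl thr] theta_alt] theta_cocycle theta_nondeg]].
have br_linr z : linear (br z) by move=> a x y; exact: brr.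
have [d hd] := quadratic_symplectic_words (fun z a x y => brl a x y z) br_linr br_alt
  br_jacobi (fun z a x y => Bl a x y z) (fun z a x y => Br a x y z) B_sym B_nondeg B_inv
  (fun z a x y => thl a x y z) (fun z a x y => thr a x y z) theta_alt theta_cocycle
  theta_nondeg.
exists d => x /(lcs_killed br_linr hd) /(_ [::]); apply.
by rewrite subnn.
Qed.
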